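(* The subgroup $K_{(2,2)}=\{f\in F:\log_2f'(0),\log_2f'(1)\in2\mathbb{Z}\}$ of Thompson's group $F$ is generated by $x_0x_1x_4^{-1}x_0^{-3}=x_0x_1x_0^{-3}x_1^{-1}$ and $x_0x_1^2x_0^{-3}$. Moreover, the normal form of every element of $K_{(2,2)}$ has even length and contains an even number of occurrences of $x_0^{\pm1}$.
   Context: Thompson's group $F$ is the group of piecewise linear homeomorphisms of $[0,1]$ that are differentiable except at finitely many dyadic rationals with slopes in $2^{\mathbb{Z}}$, with product $(fg)(t)=g(f(t))$. Generators: $x_0(t)=2t$ on $[0,1/4]$, $t+1/4$ on $[1/4,1/2]$, and $(t+1)/2$ on $[1/2,1]$. For $n\ge1$, $x_n$ is the identity on $[0,1-2^{-n}]$ and $a_n\circ x_0\circ a_n^{-1}$ on $[1-2^{-n},1]$ with $a_n(s)=1-2^{-n}+2^{-n}s$. Then $F=\langle x_0,x_1,\dots\mid x_nx_k=x_kx_{n+1}\ (k<n)\rangle$. Normal form: every element of $F$ has a unique normal form $$x_0^{a_0}x_1^{a_1}\cdots x_n^{a_n}x_n^{-b_n}\cdots x_1^{-b_1}x_0^{-b_0},$$ with $a_i,b_i\ge0$, $a_n+b_n>0$, and such that whenever $a_i>0$ and $b_i>0$ we also have $a_{i+1}+b_{i+1}>0$. Its length is $\sum_i(a_i+b_i)$. The number of occurrences of $x_0^{\pm1}$ is $a_0+b_0$. *)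

(* Thompson's group F, elements given by words in the
   generators x_n^{+-1}, acting on the rationals of [0,1]. *)
From mathcomp Require Import all_boot all_order all_algebra.
Set Implicit Arguments. Unset Strict Implicit. Unset Printing Implicit Defensive.
Import Order.TTheory GRing.Theory Num.Theory.
Local Open Scope ring_scope.

Definition x0_fun (t : rat) : rat :=
  if (t < 0) || (1 < t) then t
  else if t <= 1/4 then 2 * t
  else if t <= 1/2 then t + 1/4
  else (t + 1) / 2.

Definition x0inv_fun (t : rat) : rat :=
  if (t < 0) || (1 < t) then t
  else if t <= 1/2 then t / 2
  else if t <= 3/4 then t - 1/4
  else 2 * t - 1.

Definition a_fun (n : nat) (s : rat) : rat := 1 - 2 ^- n + 2 ^- n * s.
Definition ainv_fun (n : nat) (t : rat) : rat := (t - (1 - 2 ^- n)) * 2 ^+ n.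

Definition xn_fun (n : nat) (t : rat) : rat :=
  if n is 0 then x0_fun t
  else if t <= 1 - 2 ^- n then t else a_fun n (x0_fun (ainv_fun n t)).

Definition xninv_fun (n : nat) (t : rat) : rat :=
  if n is 0 then x0inv_fun t
  else if t <= 1 - 2 ^- n then t else a_fun n (x0inv_fun (ainv_fun n t)).

(* a letter (n, false) is x_n, (n, true) is x_n^{-1} *)
Definition letter := (nat * bool)%type.
Definition word := seq letter.

Definition act_letter (l : letter) (t : rat) : rat :=
  if l.2 then xninv_fun l.1 t else xn_fun l.1 t.

(* product convention (fg)(t) = g(f(t)): the word a_1 ... a_k acts by
   applying a_1 first *)
Definition act (w : word) (t : rat) : rat := foldl (fun s l => act_letter l s) t w.

Definition same_elt (w v : word) : Prop :=
  forall t : rat, 0 <= t <= 1 -> act w t = act v t.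

(* log_2 f'(0) = k  (right derivative at 0) *)
Definition log2_slope0 (f : rat -> rat) (k : int) : Prop :=
  exists eps : rat, 0 < eps /\ forall t : rat, 0 < t < eps -> f t = 2 ^ k * t.

(* log_2 f'(1) = k  (left derivative at 1) *)
Definition log2_slope1 (f : rat -> rat) (k : int) : Prop :=
  exists eps : rat, 0 < eps /\
    forall t : rat, 1 - eps < t < 1 -> 1 - f t = 2 ^ k * (1 - t).

Definition in_K22 (w : word) : Prop :=
  (exists k : int, log2_slope0 (act w) k /\ (2 %| k)%Z) /\
  (exists k : int, log2_slope1 (act w) k /\ (2 %| k)%Z).

Definition xp (n : nat) : letter := (n, false).
Definition xm (n : nat) : letter := (n, true).

Definition g1 : word := [:: xp 0; xp 1; xm 0; xm 0; xm 0; xm 1].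
Definition g2 : word := [:: xp 0; xp 1; xp 1; xm 0; xm 0; xm 0].

Definition winv (w : word) : word := rev (map (fun l => (l.1, ~~ l.2)) w).

(* a word in the generators g1^{+-1}, g2^{+-1}: (false,_) = g1, (true,_) = g2,
   second component true = inverse *)
Definition gen_letter (c : bool * bool) : word :=
  let g := if c.1 then g2 else g1 in if c.2 then winv g else g.
Definition expand (u : seq (bool * bool)) : word := flatten (map gen_letter u).

(* normal form x_0^{a_0} ... x_n^{a_n} x_n^{-b_n} ... x_0^{-b_0},
   given by the exponent sequences a = [a_0..a_n], b = [b_0..b_n]
   (the identity has the empty normal form a = b = [::]) *)
Definition nf_word (a b : seq nat) : word :=
  flatten [seq nseq (nth 0%N a i) (xp i) | i <- iota 0 (size a)] ++
  flatten [seq nseq (nth 0%N b i) (xm i) | i <- rev (iota 0 (size b))].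

Definition is_normal_form (a b : seq nat) : Prop :=
  size a = size b /\
  ((0 < size a)%N -> (0 < nth 0 a (size a).-1 + nth 0 b (size b).-1)%N) /\
  (forall i : nat, (i < size a)%N -> (0 < nth 0 a i)%N -> (0 < nth 0 b i)%N ->
     (0 < nth 0 a i.+1 + nth 0 b i.+1)%N).

Definition nf_length (a b : seq nat) : nat := (sumn a + sumn b)%N.
Definition nf_x0_count (a b : seq nat) : nat := (nth 0 a 0 + nth 0 b 0)%N.

(* Near 0 only the letters x_0^{+-1} move points, doubling resp. halving them, and near 1
   every letter x_n^{+-1} halves resp. doubles the distance to 1.  So for the element given
   by a word w, log2 f'(0) is the exponent sum of x_0 in w and log2 f'(1) is minus the
   exponent sum of w: the element lies in K_(2,2) iff w has an even number of letters
   x_0^{+-1} and even length.  This gives the parity statement for normal forms, and shows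
   that K_(2,2) has index 4 with coset representatives 1, x_0, x_1, x_0 x_1.
   By Reidemeister-Schreier, r x is a word in g_1, g_2 times the representative of the coset
   of r x, for each representative r and x among x_0^{+-1}, x_1^{+-1}; these sixteen
   identities are checked by rewriting with the relations of F, and
   x_(n+2) = x_0^-1 x_(n+1) x_0 extends them to all generators. *)

From mathcomp Require Import all_boot all_order all_algebra.
From mathcomp Require Import zify ring lra.
Set Implicit Arguments. Unset Strict Implicit. Unset Printing Implicit Defensive.
Import Order.TTheory GRing.Theory Num.Theory.
Local Open Scope ring_scope.

Definition mirror (f : rat -> rat) (t : rat) : rat := 1 - f (1 - t).

Lemma log2_slope0_comp f g k j :
  log2_slope0 f k -> log2_slope0 g j -> log2_slope0 (g \o f) (k + j).
Proof.
move=> [d [d_gt0 f_lin]] [e [e_gt0 g_lin]].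
have c_gt0 : 0 < 2 ^ k :> rat by rewrite exprz_gt0.
exists (Num.min d (e / 2 ^ k)); split; first by rewrite lt_min d_gt0 divr_gt0.
move=> t /andP[t_gt0]; rewrite lt_min ltr_pdivlMr // => /andP[t_lt_d t_small].
rewrite /= f_lin ?t_gt0 // g_lin; first by rewrite mulrA -expfzDr // addrC.
by rewrite mulr_gt0 //= mulrC.
Qed.

Lemma log2_slope0_uniq f k j : log2_slope0 f k -> log2_slope0 f j -> k = j.
Proof.
move=> [d [d_gt0 f_k]] [e [e_gt0 f_j]].
have m_gt0 : 0 < Num.min d e by rewrite lt_min d_gt0.
have t_gt0 : 0 < Num.min d e / 2 by rewrite divr_gt0.
have t_lt : Num.min d e / 2 < Num.min d e by rewrite ltr_pdivrMr // ltr_pMr // ltr1n.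
move: t_lt; rewrite lt_min => /andP[t_lt_d t_lt_e].
have := f_k _ (introT andP (conj t_gt0 t_lt_d)).
rewrite f_j ?t_gt0 // => /(mulIf (lt0r_neq0 t_gt0)).
by move=> /(@ieexprIz _ 2 _ _) ->.
Qed.

Lemma log2_slope0_eq_on f g k : (forall t, 0 <= t <= 1 -> f t = g t) ->
  log2_slope0 f k -> log2_slope0 g k.
Proof.
move=> fg [d [d_gt0 f_lin]]; exists (Num.min d 1); split; first by rewrite lt_min d_gt0.
move=> t /andP[t_gt0]; rewrite lt_min => /andP[t_lt_d t_lt1].
by rewrite -fg ?f_lin ?t_gt0 ?ltW.
Qed.

Lemma log2_slope1_mirror f k : log2_slope1 f k <-> log2_slope0 (mirror f) k.
Proof.
split=> -[e [e_gt0 f_lin]]; exists e; split=> // t /andP[lo hi].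
  by rewrite /mirror f_lin ?subKr //; apply/andP; split; lra.
by have := f_lin (1 - t); rewrite /mirror subKr; apply; apply/andP; split; lra.
Qed.

Lemma log2_slope1_comp f g k j :
  log2_slope1 f k -> log2_slope1 g j -> log2_slope1 (g \o f) (k + j).
Proof.
rewrite !log2_slope1_mirror => f_k g_j.
by apply: log2_slope0_eq_on (log2_slope0_comp f_k g_j) => t _; rewrite /mirror /= subKr.
Qed.

Lemma log2_slope1_uniq f k j : log2_slope1 f k -> log2_slope1 f j -> k = j.
Proof. by rewrite !log2_slope1_mirror; apply: log2_slope0_uniq. Qed.

Lemma log2_slope1_eq_on f g k : (forall t, 0 <= t <= 1 -> f t = g t) ->
  log2_slope1 f k -> log2_slope1 g k.
Proof.
rewrite !log2_slope1_mirror => fg; apply: log2_slope0_eq_on => t /andP[t_ge0 t_le1].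
by rewrite /mirror fg //; apply/andP; split; lra.
Qed.

Definition shift (f : rat -> rat) (n : nat) (t : rat) : rat :=
  if n is 0 then f t
  else if t <= 1 - 2 ^- n then t else a_fun n (f (ainv_fun n t)).

Lemma xn_funE n : xn_fun n =1 shift x0_fun n. Proof. by case: n. Qed.

Lemma xninv_funE n : xninv_fun n =1 shift x0inv_fun n. Proof. by case: n. Qed.

Lemma a_fun1 y : a_fun 1 y = (1 + y) / 2.
Proof. by rewrite /a_fun expr1; field. Qed.

Lemma ainv_fun1 t : ainv_fun 1 t = 2 * t - 1.
Proof. by rewrite /ainv_fun expr1; field. Qed.

Lemma a_funS n y : a_fun n.+1 y = (1 + a_fun n y) / 2.
Proof.
rewrite /a_fun exprS invfM.
have d_neq0 : 2 ^+ n != 0 :> rat by rewrite expf_neq0.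
by field.
Qed.

Lemma ainv_funS n t : ainv_fun n.+1 t = ainv_fun n (2 * t - 1).
Proof.
rewrite /ainv_fun exprS invfM.
have d_neq0 : 2 ^+ n != 0 :> rat by rewrite expf_neq0.
by field.
Qed.

Lemma shiftS f n t :
  shift f n.+1 t = if t <= 1/2 then t else (1 + shift f n (2 * t - 1)) / 2.
Proof.
case: n => [|n]; rewrite /shift.
  by rewrite expr1 (_ : 1 - 2^-1 = 1/2) ?a_fun1 ?ainv_fun1 //; field.
have c_gt0 : 0 < 2 ^- n.+1 :> rat by rewrite invr_gt0 exprn_gt0.
have c_le1 : 2 ^- n.+1 <= 1 :> rat by rewrite invf_le1 ?exprn_ege1 ?exprn_gt0.
have -> : 2 ^- n.+2 = 2 ^- n.+1 / 2 :> rat by rewrite exprS invfM mulrC.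
rewrite a_funS ainv_funS.
have [le_t|lt_t] := lerP t (1/2).
  by rewrite ifT //; lra.
have -> : (t <= 1 - 2 ^- n.+1 / 2) = (2 * t - 1 <= 1 - 2 ^- n.+1).
  by apply/idP/idP; lra.
by case: ifP => // _; field.
Qed.

Section ShiftProperties.

Variable f : rat -> rat.

Lemma shift_le_half n t : t <= 1/2 -> shift f n.+1 t = t.
Proof. by move=> le_t; rewrite shiftS le_t. Qed.

Lemma shift_gt_half n t :
  1/2 < t -> shift f n.+1 t = (1 + shift f n (2 * t - 1)) / 2.
Proof. by move=> lt_t; rewrite shiftS ifN // -ltNge. Qed.

Lemma shift_upper_half n s :
  0 < s -> shift f n.+1 ((1 + s) / 2) = (1 + shift f n s) / 2.
Proof.
move=> s_gt0; rewrite shift_gt_half; last by lra.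
by congr ((1 + shift f n _) / 2); field.
Qed.

Lemma shift_le_3_4 n t : t <= 3/4 -> shift f n.+2 t = t.
Proof.
move=> le_t; have [|lt_t] := lerP t (1/2); first exact: shift_le_half.
by rewrite shift_gt_half ?shift_le_half; lra.
Qed.

Lemma shift_outside n : (forall t, (t < 0) || (1 < t) -> f t = t) ->
  forall t, (t < 0) || (1 < t) -> shift f n t = t.
Proof.
move=> f_out; elim: n => [|n IHn] t t_out; first exact: f_out.
case/orP: t_out => [t_lt0|t_gt1]; first by apply: shift_le_half; lra.
rewrite shift_gt_half ?IHn; [field | apply/orP; right | ]; lra.
Qed.

Lemma shift_pos n : (forall t, 0 < t -> 0 < f t) -> forall t, 0 < t -> 0 < shift f n t.
Proof.
move=> f_pos; elim: n => [|n IHn] t t_gt0; first exact: f_pos.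
have [|lt_t] := lerP t (1/2); first by move/shift_le_half ->.
by rewrite shift_gt_half //; have := IHn (2 * t - 1); lra.
Qed.

Lemma shift_unit n : (forall t, 0 <= t <= 1 -> 0 <= f t <= 1) ->
  forall t, 0 <= t <= 1 -> 0 <= shift f n t <= 1.
Proof.
move=> f_unit; elim: n => [|n IHn] t t_unit; first exact: f_unit.
have [|lt_t] := lerP t (1/2); first by move/shift_le_half ->.
by rewrite shift_gt_half //; have := IHn (2 * t - 1); lra.
Qed.

End ShiftProperties.

Lemma log2_slope0_shift f n : log2_slope0 (shift f n.+1) 0.
Proof.
exists (1/2); split=> // t /andP[_ t_lt].
by rewrite expr0z mul1r shift_le_half // ltW.
Qed.

Lemma log2_slope1_shift f k n : log2_slope1 f k -> log2_slope1 (shift f n) k.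
Proof.
move=> f_k; elim: n => [|n [e [e_gt0 IHn]]] //.
exists (Num.min (e / 2) (1/2)); split; first by rewrite lt_min !divr_gt0.
move=> t /andP[lo t_lt1].
have : 1 - t < Num.min (e / 2) (1/2) by lra.
rewrite lt_min => /andP[t_close t_half].
have close : 1 - e < 2 * t - 1 < 1 by apply/andP; split; lra.
have := IHn _ close; rewrite shift_gt_half; last by lra.
by move: (shift f n _) (2 ^ k) => y c; nra.
Qed.

Variant x0_spec (t : rat) : rat -> Type :=
  | X0Neg of t < 0 : x0_spec t t
  | X0Big of 1 < t : x0_spec t t
  | X0Low of 0 <= t & t <= 1/4 : x0_spec t (2 * t)
  | X0Mid of 1/4 < t & t <= 1/2 : x0_spec t (t + 1/4)
  | X0High of 1/2 < t & t <= 1 : x0_spec t ((t + 1) / 2).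

Lemma x0P t : x0_spec t (x0_fun t).
Proof.
rewrite /x0_fun; have [t_lt0|t_ge0] := ltrP t 0; first exact: X0Neg.
have [t_gt1|t_le1] := ltrP 1 t; first exact: X0Big.
have [|lt_t] := lerP t (1/4); first exact: X0Low.
by have [?|?] := lerP t (1/2); [exact: X0Mid | exact: X0High].
Qed.

Variant x0inv_spec (t : rat) : rat -> Type :=
  | X0invNeg of t < 0 : x0inv_spec t t
  | X0invBig of 1 < t : x0inv_spec t t
  | X0invLow of 0 <= t & t <= 1/2 : x0inv_spec t (t / 2)
  | X0invMid of 1/2 < t & t <= 3/4 : x0inv_spec t (t - 1/4)
  | X0invHigh of 3/4 < t & t <= 1 : x0inv_spec t (2 * t - 1).

Lemma x0invP t : x0inv_spec t (x0inv_fun t).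
Proof.
rewrite /x0inv_fun; have [t_lt0|t_ge0] := ltrP t 0; first exact: X0invNeg.
have [t_gt1|t_le1] := ltrP 1 t; first exact: X0invBig.
have [|lt_t] := lerP t (1/2); first exact: X0invLow.
by have [?|?] := lerP t (3/4); [exact: X0invMid | exact: X0invHigh].
Qed.

Lemma x0K : cancel x0_fun x0inv_fun.
Proof. by move=> t; case: x0P => *; case: x0invP => *; lra. Qed.

Lemma x0invK : cancel x0inv_fun x0_fun.
Proof. by move=> t; case: x0invP => *; case: x0P => *; lra. Qed.

Lemma x0_outside t : (t < 0) || (1 < t) -> x0_fun t = t.
Proof. by case/orP => ?; case: x0P => *; lra. Qed.

Lemma x0_pos t : 0 < t -> 0 < x0_fun t.
Proof. by case: x0P => *; lra. Qed.

Lemma x0inv_pos t : 0 < t -> 0 < x0inv_fun t.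
Proof. by case: x0invP => *; lra. Qed.

Lemma x0_unit t : 0 <= t <= 1 -> 0 <= x0_fun t <= 1.
Proof. by case: x0P => *; lra. Qed.

Lemma x0_upper_half t : 1/2 <= t <= 1 -> x0_fun t = (1 + t) / 2.
Proof. by case: x0P => *; lra. Qed.

Lemma log2_slope0_x0 : log2_slope0 x0_fun 1.
Proof.
by exists (1/4); split=> // t /andP[? ?]; rewrite expr1z; case: x0P => *; lra.
Qed.

Lemma log2_slope0_x0inv : log2_slope0 x0inv_fun (-1).
Proof.
exists (1/2); split=> // t /andP[? ?].
by rewrite -invr_expz expr1z; case: x0invP => *; lra.
Qed.

Lemma log2_slope1_x0 : log2_slope1 x0_fun (-1).
Proof.
exists (1/2); split=> // t /andP[? ?].
by rewrite -invr_expz expr1z; case: x0P => *; lra.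
Qed.

Lemma log2_slope1_x0inv : log2_slope1 x0inv_fun 1.
Proof.
by exists (1/4); split=> // t /andP[? ?]; rewrite expr1z; case: x0invP => *; lra.
Qed.

Lemma shiftK f g n : cancel g f -> (forall t, 0 < t -> 0 < g t) ->
  cancel (shift g n) (shift f n).
Proof.
move=> gK g_pos; elim: n => [|n IHn] t; first exact: gK.
have [le_t|lt_t] := lerP t (1/2); first by rewrite !shift_le_half.
have -> : t = (1 + (2 * t - 1)) / 2 by field.
have : 0 < 2 * t - 1 by lra.
move: (2 * t - 1) => s s_gt0.
by rewrite !shift_upper_half ?IHn ?shift_pos.
Qed.

Lemma shift_x0K n : cancel (shift x0_fun n) (shift x0inv_fun n).
Proof. exact: shiftK x0K x0_pos. Qed.

Lemma shift_x0invK n : cancel (shift x0inv_fun n) (shift x0_fun n).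
Proof. exact: shiftK x0invK x0inv_pos. Qed.

Lemma x0_shift_comm m t :
  x0_fun (shift x0_fun m.+1 t) = shift x0_fun m.+2 (x0_fun t).
Proof.
have [le_t|lt_t] := lerP t (1/2).
  by rewrite shift_le_half // shift_le_3_4 //; case: x0P => *; lra.
have [le_t1|lt_1t] := lerP t 1; last first.
  have t_out : (t < 0) || (1 < t) by rewrite lt_1t orbT.
  by rewrite !(shift_outside _ x0_outside) ?x0_outside.
have -> : t = (1 + (2 * t - 1)) / 2 by field.
have : 0 < 2 * t - 1 <= 1 by lra.
move: (2 * t - 1) => s /andP[s_gt0 s_le1].
have /andP[y_ge0 y_le1] : 0 <= shift x0_fun m s <= 1.
  by apply: (shift_unit m x0_unit); lra.
rewrite shift_upper_half // !x0_upper_half; try lra.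
by rewrite !shift_upper_half //; lra.
Qed.

Lemma shift_comm k n t : (k < n)%N ->
  shift x0_fun k (shift x0_fun n t) = shift x0_fun n.+1 (shift x0_fun k t).
Proof.
elim: k n t => [|k IHk] [|n] t // lt_kn; first exact: x0_shift_comm.
have [le_t|lt_t] := lerP t (1/2); first by rewrite !shift_le_half.
have -> : t = (1 + (2 * t - 1)) / 2 by field.
have : 0 < 2 * t - 1 by lra.
move: (2 * t - 1) => s s_gt0.
by rewrite !shift_upper_half ?IHk ?shift_pos //; exact: x0_pos.
Qed.

Lemma act_letterE n b :
  act_letter (n, b) =1 shift (if b then x0inv_fun else x0_fun) n.
Proof. by case: b => t; rewrite /act_letter /= ?xn_funE ?xninv_funE. Qed.

Lemma act_cat u v t : act (u ++ v) t = act v (act u t).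
Proof. by rewrite /act foldl_cat. Qed.

Lemma act_letterK n b : cancel (act_letter (n, b)) (act_letter (n, ~~ b)).
Proof. by case: b => t; rewrite !act_letterE /= ?shift_x0K ?shift_x0invK. Qed.

Lemma act_winvK w : cancel (act (winv w)) (act w).
Proof.
elim: w => [|[n b] w IHw] t //.
rewrite /winv /= rev_cons -cats1 act_cat /=.
by have := act_letterK n (~~ b) (act (winv w) t); rewrite negbK => ->.
Qed.

Definition is_x0 (l : letter) : bool := l.1 == 0%N.

Definition x0_exponent (l : letter) : int := if is_x0 l then (if l.2 then -1 else 1) else 0.

Definition exponent (l : letter) : int := if l.2 then -1 else 1.

Lemma log2_slope0_letter l : log2_slope0 (act_letter l) (x0_exponent l).
Proof.
case: l => -[|n] [] /=.
- exact: log2_slope0_x0inv.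
- exact: log2_slope0_x0.
- exact: log2_slope0_shift.
- exact: log2_slope0_shift.
Qed.

Lemma log2_slope1_letter l : log2_slope1 (act_letter l) (- exponent l).
Proof.
case: l => n b; apply: (log2_slope1_eq_on (fun t _ => esym (act_letterE n b t))).
by case: b; apply: log2_slope1_shift; [exact: log2_slope1_x0inv | exact: log2_slope1_x0].
Qed.

Lemma log2_slope0_act w : log2_slope0 (act w) (\sum_(l <- w) x0_exponent l).
Proof.
elim: w => [|l w IHw]; first by exists 1; split=> // t _; rewrite big_nil expr0z mul1r.
by rewrite big_cons; exact: log2_slope0_comp (log2_slope0_letter l) IHw.
Qed.

Lemma log2_slope1_act w : log2_slope1 (act w) (- \sum_(l <- w) exponent l).
Proof.
elim: w => [|l w IHw]; first by exists 1; split=> // t _; rewrite big_nil oppr0 expr0z mul1r.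
by rewrite big_cons opprD; exact: log2_slope1_comp (log2_slope1_letter l) IHw.
Qed.

Lemma dvdz2_sum_x0_exponent w :
  (2 %| \sum_(l <- w) x0_exponent l)%Z = ~~ odd (count is_x0 w).
Proof.
elim: w => [|l w]; rewrite ?big_nil ?big_cons //=.
move: (\sum_(_ <- w) _) (count _ w) => S c IHw.
by case: l => -[|n] []; rewrite /x0_exponent /=; lia.
Qed.

Lemma dvdz2_sum_exponent w : (2 %| - \sum_(l <- w) exponent l)%Z = ~~ odd (size w).
Proof.
elim: w => [|l w]; rewrite ?big_nil ?big_cons //=.
move: (\sum_(_ <- w) _) (size w) => S c IHw.
by case: l => n []; rewrite /exponent /=; lia.
Qed.

Lemma in_K22E w : in_K22 w <-> ~~ odd (count is_x0 w) /\ ~~ odd (size w).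
Proof.
rewrite -dvdz2_sum_x0_exponent -dvdz2_sum_exponent; split.
  move=> [[k [k_slope k_even]] [j [j_slope j_even]]].
  by rewrite (log2_slope0_uniq (log2_slope0_act w) k_slope)
             (log2_slope1_uniq (log2_slope1_act w) j_slope).
by move=> [x0_even even]; split; eexists; split;
  [exact: log2_slope0_act | done | exact: log2_slope1_act | done].
Qed.

Lemma in_K22_same_elt w v : same_elt w v -> in_K22 w -> in_K22 v.
Proof.
move=> wv [[k [k_slope k_even]] [j [j_slope j_even]]]; split.
  by exists k; split=> //; exact: log2_slope0_eq_on k_slope.
by exists j; split=> //; exact: log2_slope1_eq_on j_slope.
Qed.

Lemma expand_in_K22 u : in_K22 (expand u).
Proof.
apply/in_K22E; elim: u => [|c u [IH1 IH2]] //.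
rewrite /expand /= -/(expand u) count_cat size_cat !oddD (negbTE IH1) (negbTE IH2).
by case: c => -[] [].
Qed.

(* The relations x_n x_k = x_k x_(n+1) (k < n), solved for each pair of adjacent letters
   that can be reordered, together with free cancellation. *)
Definition pair_rule (l1 l2 : letter) : option word :=
  let: (n, b1) := l1 in let: (m, b2) := l2 in
  if (n == m) && (b1 != b2) then Some [::] else
  match b1, b2 with
  | false, false => if (m < n)%N then Some [:: xp m; xp n.+1] else None
  | true, false => if (m < n)%N then Some [:: xp m; xm n.+1]
                   else if (n < m)%N then Some [:: xp m.+1; xm n] else None
  | true, true => if (n < m)%N then Some [:: xm m.+1; xm n] else None
  | false, true => None
  end.

Fixpoint reduce_step (w : word) : option word :=
  if w is l1 :: w' then
    if w' is l2 :: w'' then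
      if pair_rule l1 l2 is Some r then Some (r ++ w'')
      else omap (cons l1) (reduce_step w')
    else None
  else None.

Fixpoint reduce (fuel : nat) (w : word) : word :=
  if fuel is k.+1 then
    if reduce_step w is Some w' then reduce k w' else w
  else w.

Lemma pair_rule_act l1 l2 r : pair_rule l1 l2 = Some r -> act [:: l1; l2] =1 act r.
Proof.
case: l1 l2 => n b1 [m b2] /=.
case: ifP => [/andP[/eqP <- b12] [<-] t|_].
  by case: b1 b2 b12 => -[] // _;
    [exact: (act_letterK n true) | exact: (act_letterK n false)].
case: b1; case: b2 => //.
- case: ifP => // lt_nm [<-] t; rewrite /act /= !act_letterE.
  have e := shift_comm (shift x0inv_fun m (shift x0inv_fun n t)) lt_nm.
  rewrite !shift_x0invK in e.
  by rewrite [in RHS]e !shift_x0K.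
- case: ifP => [lt_mn [<-] t|_].
    rewrite /act /= !act_letterE.
    have e := shift_comm (shift x0inv_fun n t) lt_mn.
    rewrite shift_x0invK in e.
    by rewrite e shift_x0K.
  case: ifP => // lt_nm [<-] t; rewrite /act /= !act_letterE.
  have e := shift_comm (shift x0inv_fun n t) lt_nm.
  rewrite !shift_x0invK in e.
  by rewrite -e shift_x0K.
- case: ifP => // lt_mn [<-] t; rewrite /act /= !act_letterE.
  exact: shift_comm.
Qed.

Lemma reduce_step_cons2 l1 l2 w : reduce_step [:: l1, l2 & w] =
  if pair_rule l1 l2 is Some r then Some (r ++ w)
  else omap (cons l1) (reduce_step (l2 :: w)).
Proof. by []. Qed.

Lemma reduce_step_act w w' : reduce_step w = Some w' -> act w =1 act w'.
Proof.
elim: w w' => [|l1 [|l2 w] IHw] w' //; rewrite reduce_step_cons2.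
case E: (pair_rule l1 l2) => [r|].
  by move=> [<-] t; rewrite (act_cat [:: l1; l2] w) (pair_rule_act E) -act_cat.
case E': (reduce_step (l2 :: w)) => [v|] //= [<-] t.
exact: (IHw _ E').
Qed.

Lemma reduce_act k w : act w =1 act (reduce k w).
Proof.
elim: k w => [|k IHk] w //=.
case E: (reduce_step w) => [v|] // t.
by rewrite (reduce_step_act E) IHk.
Qed.

Lemma reduce_nil_act k u v : reduce k (u ++ winv v) = [::] -> act u =1 act v.
Proof.
move=> red t; rewrite -[act u t](act_winvK v) -(act_cat u (winv v)).
by rewrite (reduce_act k (u ++ winv v)) red.
Qed.

(* The coset of K_(2,2) of a word is indexed by the parities of its number of letters
   x_0^{+-1} and of its length. *)
Definition coset_rep (p : bool * bool) : word :=
  match p with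
  | (false, false) => [::]
  | (true, true) => [:: xp 0]
  | (false, true) => [:: xp 1]
  | (true, false) => [:: xp 0; xp 1]
  end.

Definition coset_next (p : bool * bool) (l : letter) : bool * bool :=
  (p.1 (+) is_x0 l, ~~ p.2).

Local Notation G1 := (false, false).
Local Notation G1i := (false, true).
Local Notation G2 := (true, false).
Local Notation G2i := (true, true).

Definition schreier_word (p : bool * bool) (l : letter) : seq (bool * bool) :=
  match p, l with
  | (false, false), (0, false) => [::]
  | (false, false), (0, true) => [:: G1; G2i; G1; G2; G1i]
  | (false, false), (_, false) => [::]
  | (false, false), (_, true) => [:: G1; G1; G2; G1i; G2i; G1; G2i; G1i]
  | (true, true), (0, false) => [:: G1; G2i; G1i; G2; G1i]
  | (true, true), (0, true) => [::]
  | (true, true), (_, false) => [::]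
  | (true, true), (_, true) => [:: G1; G2i; G1; G2; G1i; G2i]
  | (false, true), (0, false) => [:: G1; G2; G1i; G2i]
  | (false, true), (0, true) => [:: G1; G2; G1i; G2i; G1; G1; G2; G1i; G2i]
  | (false, true), (_, false) => [:: G1; G2; G1i; G2; G1; G2i; G1i; G1i]
  | (false, true), (_, true) => [::]
  | (true, false), (0, false) => [:: G1i; G2; G1; G2; G1; G2i; G1i; G2i; G1i]
  | (true, false), (0, true) => [:: G2; G1; G2i; G1i]
  | (true, false), (_, false) => [:: G2; G1; G2i; G1i; G2; G1i]
  | (true, false), (_, true) => [::]
  end.

Definition schreier_check (p : bool * bool) (l : letter) : bool :=
  reduce 5000 ((coset_rep p ++ [:: l]) ++
               winv (expand (schreier_word p l) ++ coset_rep (coset_next p l))) == [::].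

Lemma schreier_checkP :
  all (fun p => all (schreier_check p) [:: xp 0; xm 0; xp 1; xm 1])
      [:: (false, false); (true, true); (false, true); (true, false)].
Proof. vm_compute. reflexivity. Qed.

Definition coset_closed (l : letter) : Prop :=
  forall p, exists u,
    act (coset_rep p ++ [:: l]) =1 act (expand u ++ coset_rep (coset_next p l)).

Lemma coset_closed_small n b : (n < 2)%N -> coset_closed (n, b).
Proof.
move=> lt_n2 p; exists (schreier_word p (n, b)); apply: (@reduce_nil_act 5000).
have p_in : p \in [:: (false, false); (true, true); (false, true); (true, false)].
  by case: p => -[] [].
have l_in : (n, b) \in [:: xp 0; xm 0; xp 1; xm 1].
  by case: n lt_n2 => [|[|]] //; case: b.
by apply/eqP; move/allP/(_ p p_in)/allP/(_ _ l_in): schreier_checkP.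
Qed.

Lemma expand_cat u v : expand (u ++ v) = expand u ++ expand v.
Proof. by rewrite /expand map_cat flatten_cat. Qed.

Lemma coset_walk v : {in v, forall l, coset_closed l} ->
  forall p, exists u,
    act (coset_rep p ++ v) =1 act (expand u ++ coset_rep (foldl coset_next p v)).
Proof.
elim: v => [|l v IHv] v_closed p; first by exists [::]; rewrite cats0.
have [u1 e1] := v_closed l (mem_head l v) p.
have [u2 e2] : exists u, act (coset_rep (coset_next p l) ++ v) =1
    act (expand u ++ coset_rep (foldl coset_next (coset_next p l) v)).
  by apply: IHv => l' l'_in; apply: v_closed; rewrite inE l'_in orbT.
exists (u1 ++ u2) => t.
rewrite -cat1s catA act_cat e1 -act_cat -catA act_cat e2 -act_cat.
by rewrite expand_cat catA.
Qed.

Lemma act_xSS n b : act [:: (n.+2, b)] =1 act [:: xm 0; (n.+1, b); xp 0].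
Proof.
move=> t; change (act_letter (n.+2, b) t = x0_fun (act_letter (n.+1, b) (x0inv_fun t))).
rewrite !act_letterE; case: b.
  have e := x0_shift_comm n (shift x0inv_fun n.+1 (x0inv_fun t)).
  by rewrite shift_x0invK x0invK in e; rewrite {1}e shift_x0K.
by rewrite x0_shift_comm x0invK.
Qed.

Lemma coset_closed_all l : coset_closed l.
Proof.
case: l => n b; suff: coset_closed (n, b) /\ coset_closed (n.+1, b) by case.
elim: n => [|n [_ IHn]]; first by split; apply: coset_closed_small.
split=> // p.
have fold_eq : foldl coset_next p [:: xm 0; (n.+1, b); xp 0] = coset_next p (n.+2, b).
  by case: p => -[] [].
have [|u e] := @coset_walk [:: xm 0; (n.+1, b); xp 0] _ p.
  by move=> l; rewrite !inE => /or3P[] /eqP -> //; apply: coset_closed_small.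
by exists u => t; rewrite act_cat act_xSS -act_cat e fold_eq.
Qed.

Lemma foldl_coset_next p w :
  foldl coset_next p w = (p.1 (+) odd (count is_x0 w), p.2 (+) odd (size w)).
Proof.
elim: w p => [|l w IHw] [p1 p2] /=; first by rewrite !addbF.
rewrite IHw oddD /coset_next /=.
by case: (is_x0 l); case: p1; case: p2; case: odd; case: odd.
Qed.

Lemma even_word_expand w : ~~ odd (count is_x0 w) -> ~~ odd (size w) ->
  exists u, act w =1 act (expand u).
Proof.
move=> even_x0 even_size.
have [u e] := @coset_walk w (fun l _ => coset_closed_all l) (false, false).
exists u => t; move: (e t).
by rewrite foldl_coset_next /= (negbTE even_x0) (negbTE even_size) cats0.
Qed.

Local Close Scope ring_scope.

Definition powers (s : seq nat) (x : nat -> letter) : seq word :=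
  [seq nseq (nth 0 s i) (x i) | i <- iota 0 (size s)].

Lemma nf_wordE a b : nf_word a b = flatten (powers a xp) ++ flatten (rev (powers b xm)).
Proof. by rewrite /nf_word /powers map_rev. Qed.

Lemma count_flatten_rev (T : Type) (p : pred T) (ss : seq (seq T)) :
  count p (flatten (rev ss)) = count p (flatten ss).
Proof. by rewrite !count_flatten map_rev sumn_rev. Qed.

Lemma size_flatten_powers s x : size (flatten (powers s x)) = sumn s.
Proof.
rewrite -count_predT count_flatten -map_comp.
rewrite (eq_map (g := nth 0 s)); last by move=> i /=; rewrite count_predT size_nseq.
by rewrite -/(mkseq _ _) mkseq_nth.
Qed.

Lemma count_x0_flatten_powers s x : (forall i, is_x0 (x i) = (i == 0)) ->
  count is_x0 (flatten (powers s x)) = nth 0 s 0.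
Proof.
move=> x_x0; case: s => [|a0 s] //; rewrite /powers /= count_cat count_nseq x_x0 mul1n.
rewrite count_flatten -map_comp (iotaDl 1 0) -map_comp.
rewrite (eq_map (g := fun=> 0)); last by move=> i /=; rewrite count_nseq x_x0.
by rewrite -[RHS]addn0; congr (_ + _); elim: (iota 0 _).
Qed.

Lemma size_nf_word a b : size (nf_word a b) = nf_length a b.
Proof.
rewrite nf_wordE size_cat -[size (flatten (rev _))]count_predT count_flatten_rev.
by rewrite count_predT !size_flatten_powers.
Qed.

Lemma count_x0_nf_word a b : count is_x0 (nf_word a b) = nf_x0_count a b.
Proof. by rewrite nf_wordE count_cat count_flatten_rev !count_x0_flatten_powers. Qed.

Theorem proposition3p2 :
  (forall w : word,
      in_K22 w <-> exists u : seq (bool * bool), same_elt w (expand u)) /\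
  (forall w : word, in_K22 w ->
     forall a b : seq nat, is_normal_form a b -> same_elt w (nf_word a b) ->
       ~~ odd (nf_length a b) /\ ~~ odd (nf_x0_count a b)).
Proof.
(* The parities hold for every word representing an element of K_(2,2). *)
split=> [w | w w_K22 a b _ w_nf].
  split=> [/in_K22E[x0_even even] | [u w_u]].
    have [u w_u] := even_word_expand x0_even even.
    by exists u => t _; exact: w_u.
  by apply: in_K22_same_elt (expand_in_K22 u) => t /w_u ->.
have /in_K22E[] := in_K22_same_elt w_nf w_K22.
by rewrite size_nf_word count_x0_nf_word.
Qed.
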